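(* Let $\mathcal A=\{a_\alpha:\alpha<\omega_1\}$ (enumerated without repetition) be a near-Luzin almost disjoint family of subsets of a countable set, let $n,k\in\omega$, and let $E$ be an uncountable family of pairwise disjoint $n$-element subsets of $\omega_1$. Then there are $s\neq t$ in $E$ such that $a_\alpha\cap a_\beta\not\subseteq k=\{0,\dots,k-1\}$ for all $\alpha\in s$ and $\beta\in t$.
   Context: An almost disjoint family is a collection of infinite sets whose pairwise intersections are finite. An uncountable almost disjoint family $\mathcal A$ is near-Luzin iff for all uncountable $\mathcal C,\mathcal D\subseteq\mathcal A$ the set $\bigcup\mathcal C\cap\bigcup\mathcal D$ is infinite. The natural number $k$ is identified with $\{0,\dots,k-1\}$ (the underlying countable set is taken to be $\omega$). *)

From mathcomp Require Import all_boot.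
From mathcomp Require Import boolp classical_sets cardinality.
Set Implicit Arguments. Unset Strict Implicit. Unset Printing Implicit Defensive.
Local Open Scope classical_set_scope.
Local Open Scope card_scope.

(* (I, lt) is (order-isomorphic to) the first uncountable ordinal omega_1:
   a strict well-order, all of whose proper initial segments are countable,
   while the whole carrier is uncountable. *)
Definition omega1_order (I : Type) (lt : I -> I -> Prop) : Prop :=
  [/\ well_founded lt,
      (forall x y z, lt x y -> lt y z -> lt x z),
      (forall x y, x = y \/ lt x y \/ lt y x),
      (forall x, countable [set y | lt y x]) &
      ~ countable [set: I]].

Definition almost_disjoint (A : set (set nat)) : Prop :=
  (forall X, A X -> infinite_set X) /\
  (forall X Y, A X -> A Y -> X <> Y -> finite_set (X `&` Y)).

Definition near_Luzin (A : set (set nat)) : Prop :=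
  ~ countable A /\
  forall C D : set (set nat), C `<=` A -> D `<=` A ->
    ~ countable C -> ~ countable D ->
    infinite_set ((\bigcup_(X in C) X) `&` (\bigcup_(Y in D) Y)).

(* Enumerate every block s in E by a bijection F s : s -> {0,..,n-1}.  For one pair
   (i, j) of positions, any two uncountable subfamilies E1, E2 can be thinned to
   uncountable subfamilies whose i-th, resp. j-th, members all contain a common
   point x >= k: discard the members a_al containing some point that lies in only
   countably many members (countably many discarded); near-Luzinity makes the unions
   of what remains meet in infinitely many points, and each of them lies in
   uncountably many members on both sides.  Iterating over the n^2 pairs, any two
   distinct blocks of the final subfamilies witness the theorem. *)
From mathcomp Require Import all_boot.
From mathcomp Require Import boolp classical_sets cardinality functions.
Set Implicit Arguments. Unset Strict Implicit. Unset Printing Implicit Defensive.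
Local Open Scope classical_set_scope.
Local Open Scope card_scope.

Lemma countable_setU (T : Type) (A B : set T) :
  countable A -> countable B -> countable (A `|` B).
Proof.
move=> cA cB.
have -> : A `|` B = \bigcup_(b in [set: bool]) (if b then A else B).
  apply/seteqP; split=> x; first by case=> h; [exists true | exists false].
  by case=> -[] _ h; [left | right].
by apply: bigcup_countable => // -[].
Qed.

Lemma uncountable_distinct (T : Type) (A B : set T) :
  ~ countable A -> ~ countable B -> exists s t, [/\ A s, B t & s <> t].
Proof.
move=> nA nB.
have [s As] : exists s, A s.
  apply: contrapT => nAs; apply: nA; suff -> : A = set0 by [].
  by apply/seteqP; split=> // x Ax; apply: nAs; exists x.
have [t [Bt ts]] : exists t, B t /\ t <> s.
  apply: contrapT => nt; apply: nB; apply: sub_countable (countable1 s).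
  by apply: subset_card_le => t Bt; apply: contrapT => ts; apply: nt; exists t.
by exists s, t; split=> // st; apply: ts.
Qed.

Lemma infinite_set_unbounded (A : set nat) (k : nat) :
  infinite_set A -> exists2 x, A x & k <= x.
Proof.
move=> infA; apply: contrapT => nx; apply: infA.
apply: sub_finite_set (finite_II k) => x Ax /=.
by rewrite ltnNge; apply/negP => kx; apply: nx; exists x.
Qed.

Section NearLuzinPoint.
Variables (I : Type) (a : I -> set nat).
Hypotheses (a_inj : injective a) (a_nearLuzin : near_Luzin (range a)).

Definition containing (Z : set I) (x : nat) : set I := Z `&` [set al | a al x].

Definition heavy_part (Z : set I) : set I :=
  [set al | Z al /\ forall x, a al x -> ~ countable (containing Z x)].

Lemma uncountable_heavy_part (Z : set I) :
  ~ countable Z -> ~ countable (heavy_part Z).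
Proof.
move=> nZ cH; apply: nZ.
pose light := \bigcup_(x in [set x | countable (containing Z x)]) containing Z x.
have clight : countable light by apply: bigcup_countable.
apply: (sub_countable _ (countable_setU cH clight)); apply: subset_card_le => al Zal.
have [[x xal cx]|nlight] := pselect (exists2 x, a al x & countable (containing Z x)).
  by right; exists x.
by left; split=> // x xal cx; apply: nlight; exists x.
Qed.

Lemma near_Luzin_common_point (X Y : set I) (k : nat) :
  ~ countable X -> ~ countable Y ->
  exists2 x, k <= x & ~ countable (containing X x) /\ ~ countable (containing Y x).
Proof.
move=> nX nY.
have uncountable_image Z : ~ countable Z -> ~ countable (a @` heavy_part Z).
  move=> nZ; rewrite (eq_countable (inj_card_eq _)); last by move=> ? ? _ _ /a_inj.
  exact: uncountable_heavy_part.
have into_range Z : a @` heavy_part Z `<=` range a by move=> _ [al _ <-]; exists al.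
have [x [[_ [al [_ hal] <-] alx] [_ [be [_ hbe] <-] bex]] kx] :=
  infinite_set_unbounded k (a_nearLuzin.2 _ _ (into_range X) (into_range Y)
    (uncountable_image _ nX) (uncountable_image _ nY)).
by exists x => //; split; [exact: hal | exact: hbe].
Qed.

End NearLuzinPoint.

Section Refinement.
Variables (I : Type) (a : I -> set nat) (n k : nat) (E : set (set I)).
Variable F : set I -> I -> nat.
Hypotheses (a_inj : injective a) (a_nearLuzin : near_Luzin (range a)).
Hypothesis E_uncountable : ~ countable E.
Hypothesis E_disjoint : forall s t, E s -> E t -> s <> t -> s `&` t = set0.
Hypothesis F_bij : forall s, E s -> set_bij s `I_n (F s).

Definition slice (E1 : set (set I)) (i : nat) : set I :=
  [set al | exists2 s, E1 s & s al /\ F s al = i].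

Definition through (E1 : set (set I)) (i x : nat) : set (set I) :=
  [set s | E1 s /\ exists2 al, s al /\ F s al = i & a al x].

Definition linked (E1 E2 : set (set I)) (i j : nat) : Prop :=
  exists2 x, k <= x &
    (forall s al, E1 s -> s al -> F s al = i -> a al x) /\
    (forall t be, E2 t -> t be -> F t be = j -> a be x).

Lemma linkedS (E1 E2 E1' E2' : set (set I)) (i j : nat) :
  E1' `<=` E1 -> E2' `<=` E2 -> linked E1 E2 i j -> linked E1' E2' i j.
Proof.
move=> sE1 sE2 [x kx [h1 h2]]; exists x => //; split.
  by move=> s al /sE1; apply: h1.
by move=> t be /sE2; apply: h2.
Qed.

Lemma uncountable_slice (E1 : set (set I)) (i : nat) :
  E1 `<=` E -> ~ countable E1 -> i < n -> ~ countable (slice E1 i).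
Proof.
move=> sE1 nE1 ilt cS; apply: nE1.
pose block al := [set be | exists2 s, E s & s al /\ s be].
apply: (sub_countable _ (sub_countable (card_image_le block _) cS)).
apply: subset_card_le => s E1s.
have [_ _ /(_ i ilt) [al sal Fal]] := F_bij (sE1 _ E1s).
exists al; first by exists s.
apply/seteqP; split=> be; last by move=> sbe; exists s => //; exact: sE1.
case=> s' Es' [s'al s'be]; have [<- //|s's] := pselect (s' = s).
by have /seteqP[/(_ al (conj s'al sal))] := E_disjoint Es' (sE1 _ E1s) s's.
Qed.

Lemma uncountable_through (E1 : set (set I)) (i x : nat) :
  E1 `<=` E -> ~ countable (containing a (slice E1 i) x) ->
  ~ countable (through E1 i x).
Proof.
move=> sE1 nC cT; apply: nC.
have countable_members : countable (\bigcup_(s in through E1 i x) s).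
  apply: bigcup_countable cT _ => s [E1s _]; apply: finite_set_countable.
  by exists n; apply/card_set_bijP; exists (F s); exact: F_bij (sE1 _ E1s).
apply: (sub_countable _ countable_members).
apply: subset_card_le => al [[s E1s [sal Fal]] alx].
by exists s => //; split=> //; exists al.
Qed.

Lemma linked_through (E1 E2 : set (set I)) (i j x : nat) :
  E1 `<=` E -> E2 `<=` E -> k <= x ->
  linked (through E1 i x) (through E2 j x) i j.
Proof.
have index_unique s al al' : E s -> s al -> s al' -> F s al = F s al' -> al = al'.
  by move=> Es sal sal'; have [_ Finj _] := F_bij Es; apply: Finj; rewrite inE.
move=> sE1 sE2 kx; exists x => //; split.
  move=> s al [E1s [al' [sal' <-] al'x]] sal Fal.
  by rewrite (index_unique s al al') //; exact: sE1.
move=> t be [E2t [be' [tbe' <-] be'x]] tbe Fbe.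
by rewrite (index_unique t be be') //; exact: sE2.
Qed.

Lemma refine_linked (E1 E2 : set (set I)) (i j : nat) :
  E1 `<=` E -> E2 `<=` E -> ~ countable E1 -> ~ countable E2 -> i < n -> j < n ->
  exists E1' E2', [/\ E1' `<=` E1, E2' `<=` E2, ~ countable E1', ~ countable E2'
                    & linked E1' E2' i j].
Proof.
move=> sE1 sE2 nE1 nE2 ilt jlt.
have [x kx [nX nY]] := near_Luzin_common_point a_inj a_nearLuzin k
  (uncountable_slice sE1 nE1 ilt) (uncountable_slice sE2 nE2 jlt).
exists (through E1 i x), (through E2 j x); split.
- by move=> s [].
- by move=> s [].
- exact: uncountable_through nX.
- exact: uncountable_through nY.
- exact: linked_through.
Qed.

Lemma refine_linked_seq (L : seq ('I_n * 'I_n)) :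
  exists E1 E2, [/\ E1 `<=` E, E2 `<=` E, ~ countable E1, ~ countable E2
                  & forall p, p \in L -> linked E1 E2 p.1 p.2].
Proof.
elim: L => [|[i j] L [E1 [E2 [sE1 sE2 nE1 nE2 linkedL]]]].
  by exists E, E; split.
have [E1' [E2' [s1 s2 n1 n2 linked_ij]]] :=
  refine_linked sE1 sE2 nE1 nE2 (ltn_ord i) (ltn_ord j).
exists E1', E2'; split=> //; [exact: subset_trans sE1 | exact: subset_trans sE2 |].
move=> p; rewrite in_cons => /predU1P[-> // | pL].
exact: linkedS (linkedL p pL).
Qed.

End Refinement.

Theorem lemma1p3 (I : Type) (lt : I -> I -> Prop) (a : I -> set nat)
    (n k : nat) (E : set (set I)) :
  omega1_order lt ->
  injective a ->
  almost_disjoint (range a) ->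
  near_Luzin (range a) ->
  ~ countable E ->
  (forall s, E s -> s #= `I_n) ->
  (forall s t, E s -> E t -> s <> t -> s `&` t = set0) ->
  exists s t, [/\ E s, E t, s <> t &
    forall alpha beta, s alpha -> t beta ->
      ~ (a alpha `&` a beta `<=` `I_k)].
Proof.
move=> _ a_inj _ a_nearLuzin nE Ecard Edisj.
have [F F_bij] : {F : set I -> I -> nat & forall s, E s -> set_bij s `I_n (F s)}.
  apply: (@choice _ _ (fun s f => E s -> set_bij s `I_n f)) => s.
  have [/Ecard/card_set_bijP[f f_bij]|nEs] := pselect (E s); first by exists f.
  by exists (fun=> 0) => /nEs.
have [E1 [E2 [sE1 sE2 nE1 nE2 linked_all]]] :=
  refine_linked_seq k a_inj a_nearLuzin nE Edisj F_bij (index_enum _).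
have [s [t [E1s E2t st]]] := uncountable_distinct nE1 nE2.
exists s, t; split=> [||//|al be sal tbe]; [exact: sE1 | exact: sE2 |].
have [Fs _ _] := F_bij _ (sE1 _ E1s); have [Ft _ _] := F_bij _ (sE2 _ E2t).
have [x kx [hs ht]] :=
  linked_all (Ordinal (Fs _ sal), Ordinal (Ft _ tbe)) (mem_index_enum _).
move=> /(_ x (conj (hs s al E1s sal erefl) (ht t be E2t tbe erefl))) /=.
by rewrite ltnNge kx.
Qed.
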